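(* There exists a point $x\in\{0,1,2\}^{\mathbb{N}}$ such that, for the full shift $(\{0,1,2\}^{\mathbb{N}},S)$, $V(x)\cap V^{\log}(x)=\emptyset$.
   Context: $S$ is the left shift. For $N\ge1$ let $\mathrm{Emp}(x,N)=\frac1N\sum_{n=1}^N\delta_{S^{n-1}(x)}$, and for $N\ge2$ let $\mathrm{Emp}^{\log}(x,N)=\frac1{\log N}\sum_{n=1}^N\frac1n\delta_{S^{n-1}(x)}$. $V(x)$ (resp. $V^{\log}(x)$) is the set of Borel probability measures $\nu$ such that $\mathrm{Emp}(x,N_k)\to\nu$ (resp. $\mathrm{Emp}^{\log}(x,N_k)\to\nu$) weak-$*$ for some increasing sequence $(N_k)$. *)

From HB Require Import structures.
From mathcomp Require Import all_boot all_order all_algebra.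
From mathcomp Require Import all_classical all_reals all_analysis.
From mathcomp Require Import Rstruct Rstruct_topology.
Set Implicit Arguments. Unset Strict Implicit. Unset Printing Implicit Defensive.
Import Order.TTheory GRing.Theory Num.Theory.
Local Open Scope classical_set_scope.
Local Open Scope ring_scope.

Notation R := Rdefinitions.R.

(* an arbitrary base point (needed only to build the Borel measurable structure) *)
HB.instance Definition _ := isPointed.Build 'I_3 (@ord0 2).
Definition alphabet3 := discrete_topology 'I_3.

Definition shift_space := prod_topology (fun _ : nat => alphabet3).

Definition shift (x : shift_space) : shift_space := fun n => x n.+1.

Notation borel_shift := (g_sigma_algebraType (@open shift_space)).

Lemma inv_nat_ge0 (N : nat) : 0 <= (N%:R : R)^-1.
Proof. by rewrite invr_ge0 ler0n. Qed.

Lemma inv_ln_nat_ge0 (N : nat) : 0 <= (ln (N%:R : R))^-1.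
Proof.
rewrite invr_ge0; case: N => [|N]; first by rewrite ln0.
by apply: ln_ge0; rewrite ler1n.
Qed.

(* Emp(x,N) = (1/N) sum_{n=1}^N delta_{S^{n-1} x}  (index k = n-1). *)
Definition Emp (x : shift_space) (N : nat) : {measure set borel_shift -> \bar R} :=
  mscale (NngNum (inv_nat_ge0 N))
    (msum (fun k => @dirac _ borel_shift (iter k shift x) R) N).

(* Emp^log(x,N) = (1/log N) sum_{n=1}^N (1/n) delta_{S^{n-1} x}  (index k = n-1). *)
Definition Emp_log (x : shift_space) (N : nat) : {measure set borel_shift -> \bar R} :=
  mscale (NngNum (inv_ln_nat_ge0 N))
    (msum (fun k => mscale (NngNum (inv_nat_ge0 k.+1))
                      (@dirac _ borel_shift (iter k shift x) R)) N).

Definition weak_star_cvg (mu_ : nat -> {measure set borel_shift -> \bar R})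
    (nu : {measure set borel_shift -> \bar R}) : Prop :=
  forall f : shift_space -> R, continuous f ->
    (fun k => \int[mu_ k]_(y in [set: borel_shift]) f y) @ \oo -->
      \int[nu]_(y in [set: borel_shift]) f y.

Definition V (x : shift_space) : set (probability borel_shift R) :=
  [set nu | exists Nk : nat -> nat,
     [/\ (forall k, (Nk k < Nk k.+1)%N), (1 <= Nk 0)%N &
         weak_star_cvg (fun k => Emp x (Nk k)) nu]].

Definition V_log (x : shift_space) : set (probability borel_shift R) :=
  [set nu | exists Nk : nat -> nat,
     [/\ (forall k, (Nk k < Nk k.+1)%N), (2 <= Nk 0)%N &
         weak_star_cvg (fun k => Emp_log x (Nk k)) nu]].

From Pilot Require Import Defs.
From HB Require Import structures.
From mathcomp Require Import all_boot all_order all_algebra.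
From mathcomp Require Import all_classical all_reals all_analysis.
From mathcomp Require Import Rstruct Rstruct_topology.
From mathcomp Require Import measurable_realfun lra zify.
Import Order.TTheory GRing.Theory Num.Theory.
Local Open Scope classical_set_scope.
Local Open Scope ring_scope.

(* Write the letter i mod 3 on the whole block of positions k with
   4^i <= k + 1 < 4^(i+1).  At a time N in block j, the letter (j + 1) mod 3
   was last written on block j - 2, which ends before N/4, so some letter has
   Cesaro frequency at most 1/4 at every time.  With logarithmic weights each
   block has mass about ln 4 and the blocks of a given letter recur every third
   block, so every letter has log-frequency at least about 1/3.  A measure in
   V(x) and in V^log(x) would thus give each cylinder [a] mass > 1/4, while
   along the Cesaro subsequence some cylinder always has empirical mass
   <= 1/4. *)

Lemma ln_succ_sub_le (n : nat) : ln (n.+2%:R : R) - ln n.+1%:R <= n.+1%:R^-1.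
Proof.
rewrite -ln_div ?posrE ?ltr0n // -addn1 natrD mulrDl divff ?pnatr_eq0 //.
by rewrite mul1r le_ln1Dx // (lt_le_trans _ (inv_nat_ge0 n.+1)) ?ltrN10.
Qed.

Lemma ln_sub_le_sum_inv {m n : nat} : (m <= n)%N ->
  ln (n.+1%:R : R) - ln m.+1%:R <= \sum_(m <= k < n) k.+1%:R^-1.
Proof.
move=> mn; rewrite -(telescope_sumr (fun k => ln k.+1%:R)) //.
by apply: ler_sum_nat => k _; exact: ln_succ_sub_le.
Qed.

Lemma ler_sum_nat_subrange (F : nat -> R) (m m' n' n : nat) :
  (forall k, 0 <= F k) -> (m <= m' <= n')%N -> (n' <= n)%N ->
  \sum_(m' <= k < n') F k <= \sum_(m <= k < n) F k.
Proof.
move=> F_ge0 /andP[mm' m'n'] n'n.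
rewrite (big_cat_nat mm') ?(leq_trans m'n') //= (big_cat_nat m'n' n'n) /=.
by rewrite addrCA lerDl addr_ge0 // sumr_ge0.
Qed.

Lemma leq_infl_of_incr {u : nat -> nat} :
  (forall n, (u n < u n.+1)%N) -> forall n, (n <= u n)%N.
Proof. by move=> incr_u; elim=> // n IH; exact: leq_ltn_trans IH (incr_u n). Qed.

Lemma iter_shift (y : shift_space) k n : iter k Defs.shift y n = y (k + n)%N.
Proof. by elim: k n => // k IH n; rewrite iterS /Defs.shift IH addnS. Qed.

Section EmpiricalIntegrals.
Variables (x : shift_space) (f : borel_shift -> R).
Hypotheses (mf : measurable_fun [set: borel_shift] (fun y => (f y)%:E))
  (f_ge0 : forall y, 0 <= f y).

Let fE_ge0 y : [set: borel_shift] y -> (0 <= (f y)%:E)%E.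
Proof. by rewrite lee_fin. Qed.

Lemma Rintegral_Emp N : \int[Emp x N]_(y in [set: borel_shift]) f y =
  N%:R^-1 * \sum_(k < N) f (iter k Defs.shift x).
Proof.
rewrite /Rintegral ge0_integral_mscale // ge0_integral_measure_sum //.
under eq_bigr do rewrite integral_dirac // diracE in_setT mul1e.
by rewrite sumEFin -EFinM.
Qed.

Lemma Rintegral_Emp_log N : \int[Emp_log x N]_(y in [set: borel_shift]) f y =
  (ln N%:R)^-1 * \sum_(k < N) k.+1%:R^-1 * f (iter k Defs.shift x).
Proof.
rewrite /Rintegral ge0_integral_mscale // ge0_integral_measure_sum //.
under eq_bigr do
  rewrite ge0_integral_mscale // integral_dirac // diracE in_setT mul1e -EFinM.
by rewrite sumEFin -EFinM.
Qed.

End EmpiricalIntegrals.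

Definition cylinder_indic (a : 'I_3) (y : shift_space) : R := (y 0%N == a)%:R.

Lemma cylinder_indic_ge0 a y : 0 <= cylinder_indic a y.
Proof. exact: ler0n. Qed.

(* The indicator factors through the discrete alphabet, so every preimage is open. *)
Lemma cylinder_indic_preimage_open a (B : set R) : open (cylinder_indic a @^-1` B).
Proof.
apply: (@open_comp _ _ (fun y : shift_space => y 0%N) [set z : alphabet3 | B (z == a)%:R]).
  by move=> y _; exact: (@proj_continuous nat (fun _ => alphabet3) 0%N).
exact: discrete_open.
Qed.

Lemma continuous_cylinder_indic a : continuous (cylinder_indic a).
Proof. by apply/continuousP => B _; exact: cylinder_indic_preimage_open. Qed.

Lemma measurable_cylinder_indic a :
  measurable_fun [set: borel_shift] (fun y => (cylinder_indic a y)%:E).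
Proof.
move=> _ B _; rewrite setTI; apply: sub_sigma_algebra.
exact: (cylinder_indic_preimage_open a (EFin @^-1` B)).
Qed.

Definition block_color (k : nat) : nat := trunc_log 4 k.+1 %% 3.

Definition block_sequence : shift_space := fun k => inord (block_color k).

Lemma cylinder_indic_block_sequence (a : 'I_3) k :
  cylinder_indic a (iter k Defs.shift block_sequence) = (block_color k == a)%:R.
Proof. by rewrite /cylinder_indic iter_shift addn0 -val_eqE /= inordK // ltn_mod. Qed.

Lemma block_color_eq i k : ((4 ^ i).-1 <= k < (4 ^ i.+1).-1)%N ->
  block_color k = (i %% 3)%N.
Proof.
have := expn_gt0 4 i; have := expn_gt0 4 i.+1.
by move=> ? ? ?; rewrite /block_color (@trunc_log_eq _ i) //; lia.
Qed.

Definition log_weight (a k : nat) : R := k.+1%:R^-1 * (block_color k == a)%:R.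

Lemma log_weight_ge0 a k : 0 <= log_weight a k.
Proof. by rewrite mulr_ge0 ?inv_nat_ge0 ?ler0n. Qed.

Lemma ln4_le_block_sum i :
  ln 4 <= \sum_((4 ^ i).-1 <= k < (4 ^ i.+1).-1) log_weight (i %% 3) k.
Proof.
have le_ends : ((4 ^ i).-1 <= (4 ^ i.+1).-1)%N.
  by rewrite -!subn1 leq_sub2r ?leq_exp2l.
under eq_big_nat => k /block_color_eq color_k do
  rewrite /log_weight color_k eqxx mulr1.
apply: le_trans (ln_sub_le_sum_inv le_ends).
rewrite !prednK ?expn_gt0 // !natrX !lnXn ?ltr0n //.
by rewrite -mulrnBr // subSnn.
Qed.

Lemma ln4_le_triple_block_sum a t : (a < 3)%N ->
  ln 4 <= \sum_((64 ^ t).-1 <= k < (64 ^ t.+1).-1) log_weight a k.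
Proof.
move=> a3; have color_a : ((3 * t + a) %% 3 = a)%N.
  by rewrite mulnC modnMDl modn_small.
apply: le_trans (ln4_le_block_sum (3 * t + a)) _; rewrite color_a.
apply: ler_sum_nat_subrange; first exact: log_weight_ge0.
all: rewrite -[64%N]/(4 ^ 3)%N -!expnM -!subn1 ?leq_sub2r ?leq_exp2l //; lia.
Qed.

Lemma log_sum_ge a t : (a < 3)%N ->
  t%:R * ln 4 <= \sum_(0 <= k < (64 ^ t).-1) log_weight a k.
Proof.
move=> a3; elim: t => [|t IH].
  by rewrite mul0r sumr_ge0 // => k _; exact: log_weight_ge0.
have le_ends : ((64 ^ t).-1 <= (64 ^ t.+1).-1)%N.
  by rewrite -!subn1 leq_sub2r ?leq_exp2l.
rewrite (big_cat_nat (leq0n _) le_ends) /= -nat1r mulrDl mul1r addrC.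
exact: lerD (ln4_le_triple_block_sum a t a3) IH.
Qed.

Definition log_freq (a N : nat) : R :=
  (ln N%:R)^-1 * \sum_(k < N) log_weight a k.

(* With t = trunc_log 64 N, the ratio is at least t / (3 (t + 1)), which is
   >= 4/15 as soon as t >= 4. *)
Lemma log_freq_ge a N : (a < 3)%N -> (64 ^ 4 <= N)%N -> 4 / 15 <= log_freq a N.
Proof.
move=> a3 N_ge; set t := trunc_log 64 N.
have t_ge4 : (4 <= t)%N by exact: trunc_log_max.
have N_gt1 : (1 < N)%N by apply: leq_trans N_ge.
have N_ge_pow : (64 ^ t <= N)%N by apply: trunc_logP; lia.
have N_lt_pow : (N < 4 ^ (3 * t.+1))%N by rewrite expnM trunc_log_ltn.
have sum_ge : t%:R * ln 4 <= \sum_(k < N) log_weight a k.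
  apply: le_trans (log_sum_ge a t a3) _; rewrite -(big_mkord xpredT).
  apply: ler_sum_nat_subrange => //; first exact: log_weight_ge0.
  exact: leq_trans (leq_pred _) N_ge_pow.
have lnN_le : ln N%:R <= 3 * t.+1%:R * ln 4 :> R.
  rewrite -natrM mulr_natl -lnXn ?ltr0n // -natrX.
  by rewrite ler_ln ?posrE ?ltr0n ?expn_gt0 ?(ltnW N_gt1) // ler_nat ltnW.
have lnN_gt0 : 0 < ln (N%:R : R) by rewrite ln_gt0 // ltr1n.
have ln4_gt0 : 0 < ln (4 : R) by rewrite ln_gt0 // ltr1n.
have t_ge4R : 4 <= t%:R :> R by rewrite (ler_nat R 4).
rewrite /log_freq ler_pdivlMl // mulrA.
have : 0 <= ln 4 * (t%:R - 4) :> R by rewrite mulr_ge0 ?subr_ge0 // ltW.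
by move: sum_ge lnN_le; rewrite -nat1r; lra.
Qed.

(* The color (j + 1) mod 3, j = trunc_log 4 N, was last used by block j - 2. *)
Lemma stale_color_lt_quarter N k : (k < N)%N ->
  block_color k = ((trunc_log 4 N).+1 %% 3)%N -> (k < N %/ 4)%N.
Proof.
move=> lt_kN; set j := trunc_log 4 N; set i := trunc_log 4 k.+1.
rewrite /block_color -/i => color_k.
have i_le_j : (i <= j)%N by exact: leq_trunc_log.
have i2_le_j : (i.+2 <= j)%N by lia.
have k_lt : (k.+1 < 4 ^ i.+1)%N by exact: trunc_log_ltn.
have N_ge : (4 ^ j <= N)%N by apply: trunc_logP; lia.
have := leq_pexp2l (isT : (0 < 4)%N) i2_le_j.
by rewrite leq_divRL //; rewrite !expnS in k_lt *; lia.
Qed.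

Lemma rare_color_count N : exists2 a, (a < 3)%N &
  (4 * \sum_(k < N) (block_color k == a) <= N)%N.
Proof.
set a := ((trunc_log 4 N).+1 %% 3)%N; exists a; first exact: ltn_mod.
rewrite -(big_mkord xpredT (fun k => nat_of_bool (block_color k == a))).
rewrite (big_cat_nat (leq0n (N %/ 4)) (leq_div N 4)) /=.
rewrite [X in (_ + X)%N]big1_seq ?addn0; last first.
  move=> k /andP[_]; rewrite mem_index_iota => /andP[k_ge k_lt].
  by case: eqP => // /(stale_color_lt_quarter _ _ k_lt); rewrite ltnNge k_ge.
apply: leq_trans (_ : 4 * \sum_(0 <= k < N %/ 4) 1 <= N)%N.
  by rewrite leq_mul2l leq_sum // => k _; exact: leq_b1.
by rewrite sum_nat_const_nat subn0 muln1 mulnC leq_divM.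
Qed.

Definition cesaro_freq (a N : nat) : R :=
  N%:R^-1 * \sum_(k < N) (block_color k == a)%:R.

Lemma rare_color N : (0 < N)%N -> exists2 a, (a < 3)%N & cesaro_freq a N <= 1 / 4.
Proof.
move=> N_gt0; have [a a3 count_le] := rare_color_count N; exists a => //.
have : 4 * (\sum_(k < N) (block_color k == a))%:R <= N%:R :> R.
  by rewrite -natrM ler_nat.
by rewrite /cesaro_freq -natr_sum ler_pdivrMl ?ltr0n //; lra.
Qed.

Lemma Rintegral_Emp_cylinder (a : 'I_3) N :
  \int[Emp block_sequence N]_(y in [set: borel_shift]) cylinder_indic a y =
    cesaro_freq a N.
Proof.
rewrite (Rintegral_Emp _ _ (measurable_cylinder_indic a) (cylinder_indic_ge0 a)).
by under eq_bigr do rewrite cylinder_indic_block_sequence.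
Qed.

Lemma Rintegral_Emp_log_cylinder (a : 'I_3) N :
  \int[Emp_log block_sequence N]_(y in [set: borel_shift]) cylinder_indic a y =
    log_freq a N.
Proof.
rewrite (Rintegral_Emp_log _ _ (measurable_cylinder_indic a) (cylinder_indic_ge0 a)).
by under eq_bigr do rewrite cylinder_indic_block_sequence.
Qed.

Theorem proposition4p5 : exists x : shift_space, V x `&` V_log x = set0.
Proof.
exists block_sequence; apply/seteqP; split => //.
move=> nu [[Nk [incrN _ cvgN]] [Mk [incrM _ cvgM]]].
have mass_ge (a : 'I_3) :
    4 / 15 <= \int[nu]_(y in [set: borel_shift]) cylinder_indic a y.
  apply: cvgr_to_ge (cvgM _ (continuous_cylinder_indic a)) _.
  near=> k; rewrite Rintegral_Emp_log_cylinder log_freq_ge //.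
  by apply: leq_trans (leq_infl_of_incr incrM k); near: k; exists (64 ^ 4)%N.
have freq_gt : \forall k \near \oo, forall a : 'I_3, 1 / 4 < cesaro_freq a (Nk k).
  apply: filter_forall => a; have := cvgN _ (continuous_cylinder_indic a).
  under eq_fun do rewrite Rintegral_Emp_cylinder.
  by move/cvgr_gt; apply; apply: lt_le_trans (mass_ge a); lra.
have [k [k_gt0 freq_k]] :
    exists k, (0 < k)%N /\ forall a : 'I_3, 1 / 4 < cesaro_freq a (Nk k).
  by apply: (@filter_ex _ \oo); near=> k; split; near: k; [exists 1%N | exact: freq_gt].
have [a a3 rare] := rare_color _ (leq_trans k_gt0 (leq_infl_of_incr incrN k)).
by have := freq_k (Ordinal a3); rewrite ltNge rare.
Unshelve. all: end_near.
Qed.
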